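(* Let $\rho\in[0,1)$. Then \[ (1-3\rho+2\rho^{n+1})n+3\rho^{n+1}\ge3\rho\quad\text{for all integers } n\ge1 \] holds if and only if $\rho\in[0,\tfrac15]$. *)

From Stdlib Require Import Reals Lra Lia.

(* At n = 1 the inequality reads (1 - rho)(1 - 5 rho) >= 0, which for rho < 1
   is exactly rho <= 1/5.  For n >= 2 the powers of rho only help, and
   (1 - 3 rho) n >= 2 - 6 rho >= 3 rho as soon as rho <= 2/9. *)
From Stdlib Require Import Reals Lra Lia.
Open Scope R_scope.

Lemma ineq_at_one_iff (rho : R) (Hrho : rho < 1) :
  (1 - 3 * rho + 2 * rho ^ (1 + 1)) * INR 1 + 3 * rho ^ (1 + 1) >= 3 * rho
  <-> rho <= 1 / 5.
Proof.
  assert (Hfactor : (1 - 3 * rho + 2 * rho ^ (1 + 1)) * INR 1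
                    + 3 * rho ^ (1 + 1) - 3 * rho = (1 - rho) * (1 - 5 * rho)).
  { simpl; ring. }
  split; intros H; nra.
Qed.

Lemma ineq_from_two (rho : R) (n : nat) :
  0 <= rho <= 2 / 9 -> (2 <= n)%nat ->
  (1 - 3 * rho + 2 * rho ^ (n + 1)) * INR n + 3 * rho ^ (n + 1) >= 3 * rho.
Proof.
  intros Hrho Hn.
  assert (Hn_ge2 : 2 <= INR n) by (change 2 with (INR 2); apply le_INR; exact Hn).
  assert (Hpow : 0 <= rho ^ (n + 1)) by (apply pow_le; lra).
  assert (Hlin : (1 - 3 * rho) * INR n >= 3 * rho) by nra.
  nra.
Qed.

Theorem lemma4p2 (rho : R) (Hrho : 0 <= rho < 1) :
  (forall n : nat, (1 <= n)%nat ->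
     (1 - 3 * rho + 2 * rho ^ (n + 1)) * INR n + 3 * rho ^ (n + 1) >= 3 * rho)
  <-> (0 <= rho <= 1 / 5).
Proof.
  split.
  - intros H.
    split; [lra |].
    apply ineq_at_one_iff; [lra |].
    exact (H 1%nat (le_n 1)).
  - intros Hr n Hn.
    destruct (Nat.eq_dec n 1) as [-> | Hn1].
    + apply ineq_at_one_iff; lra.
    + apply ineq_from_two; [lra | lia].
Qed.
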